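(* Let $(a,b,c,\lambda)\in(\mathbb F^\times)^4$ and $(\mu,\varphi,\omega^*,\omega^\varepsilon)\in\mathbb F^\times\times\mathbb F^3$. Suppose a $\triangle_q$-module $V$ contains a nonzero vector $v$ with $Bv=(\mu+\mu^{-1})v$, $(B-\mu q^2-\mu^{-1}q^{-2})Av=(q-q^{-1})\varphi v$, $\beta v=\omega^*v$ and $\gamma v=\omega^\varepsilon v$. Then $(a,b,c,\lambda)$ is feasible for $(\mu,\varphi,\omega^*,\omega^\varepsilon)$ if and only if both (i) $\mu=b\lambda^{-1}$ and (ii) there exists a $\triangle_q$-module homomorphism $M_\lambda(a,b,c)\to V$ sending $m_0$ to $v$.
   Context: $\mathbb F$ is an algebraically closed field and $q\in\mathbb F^\times$ is a root of unity of order $d\notin\{1,2,4\}$. $\triangle_q$ is the unital associative $\mathbb F$-algebra with generators $A,B,C$ subject to: each of $A+\frac{qBC-q^{-1}CB}{q^2-q^{-2}}$, $B+\frac{qCA-q^{-1}AC}{q^2-q^{-2}}$, $C+\frac{qAB-q^{-1}BA}{q^2-q^{-2}}$ is central; $\alpha,\beta,\gamma$ denote these multiplied by $q+q^{-1}$. For $(a,b,c,\lambda)\in(\mathbb F^\times)^4$, $i\in\mathbb N$: $\theta_i=a\lambda^{-1}q^{2i}+a^{-1}\lambda q^{-2i}$, $\theta_i^*=b\lambda^{-1}q^{2i}+b^{-1}\lambda q^{-2i}$, $\varphi_i=a^{-1}b^{-1}\lambda q(q^i-q^{-i})(\lambda^{-1}q^{i-1}-\lambda q^{1-i})(q^{-i}-abc\lambda^{-1}q^{i-1})(q^{-i}-abc^{-1}\lambda^{-1}q^{i-1})$.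 $M_\lambda(a,b,c)$ is the $\triangle_q$-module with basis $\{m_i\}_{i\in\mathbb N}$ with $(A-\theta_i)m_i=m_{i+1}$, $(B-\theta_i^* )m_i=\varphi_im_{i-1}$, and $\alpha,\beta,\gamma$ acting as $(b+b^{-1})(c+c^{-1})+(a+a^{-1})(\lambda q+\lambda^{-1}q^{-1})$, $(c+c^{-1})(a+a^{-1})+(b+b^{-1})(\lambda q+\lambda^{-1}q^{-1})$, $(a+a^{-1})(b+b^{-1})+(c+c^{-1})(\lambda q+\lambda^{-1}q^{-1})$. $(a,b,c,\lambda)$ is called feasible for $(\mu,\varphi,\omega^*,\omega^\varepsilon)$ if $\mu=b\lambda^{-1}$, $\varphi=(c+c^{-1})(\lambda-\lambda^{-1})-(a+a^{-1})(bq-b^{-1}q^{-1})$, $\omega^*=(c+c^{-1})(a+a^{-1})+(b+b^{-1})(\lambda q+\lambda^{-1}q^{-1})$, and $\omega^\varepsilon=(a+a^{-1})(b+b^{-1})+(c+c^{-1})(\lambda q+\lambda^{-1}q^{-1})$. *)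

From HB Require Import structures.
From mathcomp Require Import all_boot all_order all_algebra.
Set Implicit Arguments. Unset Strict Implicit. Unset Printing Implicit Defensive.
Import Order.TTheory GRing.Theory.
Local Open Scope ring_scope.

Section TriQ.
Variable F : fieldType.
Variable q : F.

Section Mod.
Variable V : lmodType F.
Variables A B C : V -> V.

Definition centA (x : V) : V :=
  A x + (q ^+ 2 - q^-2)^-1 *: (q *: B (C x) - q^-1 *: C (B x)).
Definition centB (x : V) : V :=
  B x + (q ^+ 2 - q^-2)^-1 *: (q *: C (A x) - q^-1 *: A (C x)).
Definition centC (x : V) : V :=
  C x + (q ^+ 2 - q^-2)^-1 *: (q *: A (B x) - q^-1 *: B (A x)).

Definition alpha_op (x : V) : V := (q + q^-1) *: centA x.
Definition beta_op (x : V) : V := (q + q^-1) *: centB x.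
Definition gamma_op (x : V) : V := (q + q^-1) *: centC x.

(* A,B,C (linear operators) define a Delta_q-module structure on V iff the
   three elements above commute with the generators A, B, C (i.e. are central). *)
Definition commutes (X Y : V -> V) := forall x, X (Y x) = Y (X x).
Definition is_triq_module : Prop :=
  (commutes centA A /\ commutes centA B /\ commutes centA C) /\
  (commutes centB A /\ commutes centB B /\ commutes centB C) /\
  (commutes centC A /\ commutes centC B /\ commutes centC C).
End Mod.

(* realised on {poly F}, with basis m_i = 'X^i *)
Section Mlam.
Variables a b c lam : F.

Definition theta (i : nat) : F := a / lam * q ^+ (2 * i) + lam / a * q ^- (2 * i).
Definition thetas (i : nat) : F := b / lam * q ^+ (2 * i) + lam / b * q ^- (2 * i).
Definition phi (i : nat) : F :=
  a^-1 * b^-1 * lam * q * (q ^+ i - q ^- i)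
  * (lam^-1 * q ^+ i / q - lam * q / q ^+ i)
  * (q ^- i - a * b * c / lam * q ^+ i / q)
  * (q ^- i - a * b / c / lam * q ^+ i / q).

Definition alphaM : F :=
  (b + b^-1) * (c + c^-1) + (a + a^-1) * (lam * q + lam^-1 * q^-1).
Definition betaM : F :=
  (c + c^-1) * (a + a^-1) + (b + b^-1) * (lam * q + lam^-1 * q^-1).
Definition gammaM : F :=
  (a + a^-1) * (b + b^-1) + (c + c^-1) * (lam * q + lam^-1 * q^-1).

(* (A - theta_i) m_i = m_{i+1} *)
Definition AM (p : {poly F}) : {poly F} :=
  'X * p + \poly_(i < size p) (theta i * p`_i).
(* (B - theta*_i) m_i = phi_i m_{i-1}  (phi_0 = 0) *)
Definition BM (p : {poly F}) : {poly F} :=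
  \poly_(i < size p) (thetas i * p`_i + phi i.+1 * p`_i.+1).
(* C is determined by gamma acting as the scalar gammaM:
   C = gammaM/(q+q^-1) - (qAB - q^-1 BA)/(q^2-q^-2) *)
Definition CM (p : {poly F}) : {poly F} :=
  (gammaM / (q + q^-1)) *: p
  - (q ^+ 2 - q^-2)^-1 *: (q *: AM (BM p) - q^-1 *: BM (AM p)).

Definition is_Mhom (V : lmodType F) (A B C : V -> V) (f : {poly F} -> V) : Prop :=
  [/\ forall p, f (AM p) = A (f p),
      forall p, f (BM p) = B (f p) &
      forall p, f (CM p) = C (f p)].
End Mlam.

Definition feasible (a b c lam mu vphi omS omE : F) : Prop :=
  [/\ mu = b / lam,
      vphi = (c + c^-1) * (lam - lam^-1) - (a + a^-1) * (b * q - b^-1 * q^-1),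
      omS = (c + c^-1) * (a + a^-1) + (b + b^-1) * (lam * q + lam^-1 * q^-1) &
      omE = (a + a^-1) * (b + b^-1) + (c + c^-1) * (lam * q + lam^-1 * q^-1)].

End TriQ.

From HB Require Import structures.
From mathcomp Require Import all_boot all_order all_algebra.
From mathcomp Require Import ring.
Set Implicit Arguments.
Unset Strict Implicit.
Unset Printing Implicit Defensive.

Import GRing.Theory.
Local Open Scope ring_scope.

(* The module M_lambda(a,b,c), realised on F[X] with m_i = X^i, itself satisfies the
   hypotheses of the theorem at m_0 = 1 with the feasible values of mu, varphi,
   omega^* and omega^eps; these are coefficient identities in F[X].  A homomorphism
   sending m_0 to v therefore transports them to v, and v <> 0 forces feasibility.
   Conversely, given feasibility, set m_0 = v, m_(k+1) = (A - theta_k) m_k and send X^k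
   to m_k.  This map f intertwines A by construction, and beta, gamma act on its image
   by scalars since they commute with A.  The defect B f - f B_M vanishes on 1 and on
   A_M 1 by the hypotheses on v; eliminating C through gamma in the scalar action of
   beta shows that it then vanishes on A_M^2 p whenever it vanishes on p and A_M p, so
   it vanishes everywhere, and C is intertwined because gamma acts by the same scalar
   on both sides. *)

Lemma prim_root_expr4_neq1 (F : fieldType) (q : F) d :
  d.-primitive_root q -> d \notin [:: 1%N; 2%N; 4%N] -> q ^+ 4 != 1.
Proof.
move=> hq; apply: contra; rewrite -(prim_order_dvd hq) => dvd_d4.
have := dvdn_leq (isT : (0 < 4)%N) dvd_d4; move: dvd_d4 (prim_order_gt0 hq).
by case: d {hq} => [|[|[|[|[|[|d]]]]]].
Qed.

Lemma scalerIv (F : fieldType) (V : lmodType F) (v : V) :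
  v != 0 -> injective ( *:%R^~ v : F -> V).
Proof.
move=> hv s t /eqP; rewrite -subr_eq0 -scalerBl scaler_eq0 (negbTE hv) orbF.
by rewrite subr_eq0 => /eqP.
Qed.

Section Nondegenerate.
Variables (F : fieldType) (q : F).
Hypotheses (hq : q != 0) (hq4 : q ^+ 4 != 1).

(* The first two are stated in the shape of the side conditions produced by [field]. *)
Lemma qqqq_sub1_neq0 : q * q * (q * q) - 1 != 0.
Proof.
have -> : q * q * (q * q) = q ^+ 4 by ring.
by rewrite subr_eq0.
Qed.

Lemma qq_add1_neq0 : q * q + 1 != 0.
Proof.
apply: contraNneq qqqq_sub1_neq0 => h.
have -> : q * q * (q * q) - 1 = (q * q + 1) * (q * q - 1) by ring.
by rewrite h mul0r.
Qed.

Lemma qDV_neq0 : q + q^-1 != 0.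
Proof.
have -> : q + q^-1 = (q * q + 1) / q by field.
by rewrite mulf_neq0 ?invr_eq0 ?qq_add1_neq0.
Qed.

Lemma q2BV2_neq0 : q ^+ 2 - q^-2 != 0.
Proof.
have -> : q ^+ 2 - q^-2 = (q * q * (q * q) - 1) / (q * q) by field.
by rewrite mulf_neq0 ?invr_eq0 ?mulf_neq0 ?qqqq_sub1_neq0.
Qed.

Lemma qBV_neq0 : q - q^-1 != 0.
Proof.
apply: contraNneq q2BV2_neq0 => h.
have -> : q ^+ 2 - q^-2 = (q + q^-1) * (q - q^-1) by field.
by rewrite h mulr0.
Qed.

End Nondegenerate.

Section DeltaModule.
Variables (F : fieldType) (q : F) (V : lmodType F) (A B C : {linear V -> V}).

Lemma beta_op_is_linear : linear (beta_op q A B C).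
Proof.
move=> t x y; exact: (linearP ((q + q^-1) \*:
  (B \+ (q ^+ 2 - q^-2)^-1 \*: (q \*: (C \o A) \- q^-1 \*: (A \o C))))).
Qed.

Lemma gamma_op_is_linear : linear (gamma_op q A B C).
Proof.
move=> t x y; exact: (linearP ((q + q^-1) \*:
  (C \+ (q ^+ 2 - q^-2)^-1 \*: (q \*: (A \o B) \- q^-1 \*: (B \o A))))).
Qed.

HB.instance Definition _ :=
  GRing.isLinear.Build F V V *:%R (beta_op q A B C) beta_op_is_linear.
HB.instance Definition _ :=
  GRing.isLinear.Build F V V *:%R (gamma_op q A B C) gamma_op_is_linear.

Lemma C_gamma_op : q + q^-1 != 0 -> forall x,
  C x = (q + q^-1)^-1 *: gamma_op q A B C x
        - (q ^+ 2 - q^-2)^-1 *: (q *: A (B x) - q^-1 *: B (A x)).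
Proof. by move=> hs x; rewrite /gamma_op /centC scalerA mulVf // scale1r addrK. Qed.

Hypothesis hV : is_triq_module q A B C.

Lemma beta_op_commutes_A : commutes (beta_op q A B C) A.
Proof. by case: hV => _ [[hBA _] _] x; rewrite /beta_op hBA linearZ. Qed.

Lemma gamma_op_commutes_A : commutes (gamma_op q A B C) A.
Proof. by case: hV => _ [_ [hCA _]] x; rewrite /gamma_op hCA linearZ. Qed.

End DeltaModule.

Section Intertwining.
Variables (F : fieldType) (q : F) (U V : lmodType F) (f : {linear U -> V}).
Variables (A' B' C' : U -> U) (A B C : V -> V).
Hypotheses (hfA : forall u, f (A' u) = A (f u)) (hfB : forall u, f (B' u) = B (f u))
  (hfC : forall u, f (C' u) = C (f u)).

Let fZ a u : f (a *: u) = a *: f u. Proof. exact: linearZZ. Qed.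
Let fD u w : f (u + w) = f u + f w. Proof. exact: raddfD. Qed.
Let fB u w : f (u - w) = f u - f w. Proof. exact: raddfB. Qed.

Lemma beta_op_morph : {morph f : u / beta_op q A' B' C' u >-> beta_op q A B C u}.
Proof. by move=> u; rewrite /beta_op /centB fZ fD fZ fB !fZ !hfA hfB !hfC hfA. Qed.

Lemma gamma_op_morph : {morph f : u / gamma_op q A' B' C' u >-> gamma_op q A B C u}.
Proof. by move=> u; rewrite /gamma_op /centC fZ fD fZ fB !fZ hfC !hfA !hfB hfA. Qed.

End Intertwining.

Section Mlambda.
Variables (F : fieldType) (q a b c lam : F).

Local Notation AM := (AM q a lam).
Local Notation BM := (BM q a b c lam).
Local Notation CM := (CM q a b c lam).

Lemma coef_AM p k :
  (AM p)`_k = (if k is k'.+1 then p`_k' else 0) + theta q a lam k * p`_k.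
Proof.
rewrite /AM coefD coefXM coef_poly; case: ltnP => h; first by case: k h.
by rewrite (nth_default 0 h) mulr0; case: k h.
Qed.

Lemma coef0_AM p : (AM p)`_0 = theta q a lam 0 * p`_0.
Proof. by rewrite coef_AM add0r. Qed.

Lemma coefS_AM p k : (AM p)`_k.+1 = p`_k + theta q a lam k.+1 * p`_k.+1.
Proof. exact: coef_AM. Qed.

Lemma coef_BM p k :
  (BM p)`_k = thetas q b lam k * p`_k + phi q a b c lam k.+1 * p`_k.+1.
Proof.
rewrite /BM coef_poly; case: ltnP => h //.
by rewrite (nth_default 0 h) (nth_default 0 (leqW h)) !mulr0 addr0.
Qed.

Lemma AM_is_linear : linear AM.
Proof.
move=> t u w; apply/polyP => -[|k].
  by rewrite !(coef0_AM, coefD, coefZ); ring.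
by rewrite !(coefS_AM, coefD, coefZ); ring.
Qed.

Lemma BM_is_linear : linear BM.
Proof. by move=> t u w; apply/polyP => k; rewrite !(coef_BM, coefD, coefZ); ring. Qed.

HB.instance Definition _ := GRing.isLinear.Build F {poly F} {poly F} *:%R AM AM_is_linear.
HB.instance Definition _ := GRing.isLinear.Build F {poly F} {poly F} *:%R BM BM_is_linear.

Lemma AM_Xn k : AM ('X^k) = 'X^(k.+1) + theta q a lam k *: 'X^k.
Proof.
apply/polyP => -[|j].
  rewrite coef0_AM !(coefD, coefZ, coefXn) add0r.
  by case: k => [|k]; rewrite ?mulr0.
rewrite coefS_AM !(coefD, coefZ, coefXn) eqSS.
by case: (j.+1 =P k) => [<-|_]; rewrite ?mulr0.
Qed.

Hypotheses (hq : q != 0) (hq4 : q ^+ 4 != 1).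
Hypotheses (ha : a != 0) (hb : b != 0) (hc : c != 0) (hlam : lam != 0).

Let nz_qq1 := qq_add1_neq0 hq4.
Let nz_qqqq1 := qqqq_sub1_neq0 hq4.

Lemma gamma_opM p : gamma_op q AM BM CM p = gammaM q a b c lam *: p.
Proof.
by rewrite /gamma_op /centC /CM subrK scalerA mulrCA divff ?mulr1 ?qDV_neq0.
Qed.

Lemma beta_opM p : beta_op q AM BM CM p = betaM q a b c lam *: p.
Proof.
apply/polyP => j; rewrite /beta_op /centB /CM.
case: j => [|[|j]]; rewrite !(coef0_AM, coefS_AM, coef_BM, coefZ, coefD, coefB, coefN).
all: rewrite /betaM /gammaM /theta /thetas /phi !exprM ?(exprAC _ 2) !exprS ?expr0.
1,2: by field; rewrite ?(oner_neq0, hq, ha, hb, hc, hlam, nz_qq1, nz_qqqq1).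
have hqj : q ^+ j != 0 by rewrite expf_neq0.
by field; rewrite ?(oner_neq0, hq, ha, hb, hc, hlam, hqj, nz_qq1, nz_qqqq1).
Qed.

Lemma BM1 : BM 1 = (b / lam + (b / lam)^-1) *: 1.
Proof.
apply/polyP => k; rewrite coef_BM coefZ !coef1.
by case: k => [|k] /=; rewrite ?mulr0 ?addr0 // /thetas !expr0 invr1 !mulr1 invf_div.
Qed.

Definition varphiM : F :=
  (c + c^-1) * (lam - lam^-1) - (a + a^-1) * (b * q - b^-1 * q^-1).

Lemma BM_AM1 : BM (AM 1) - (b / lam * q ^+ 2 + (b / lam)^-1 * q^-2) *: AM 1
  = ((q - q^-1) * varphiM) *: 1.
Proof.
apply/polyP => -[|[|k]]; rewrite !(coef0_AM, coefS_AM, coef_BM, coefB, coefZ, coef1) /=.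
all: rewrite ?(mulr0, addr0, subrr) // /varphiM /theta /thetas /phi.
all: by field; rewrite ?(oner_neq0, hq, ha, hb, hc, hlam).
Qed.

End Mlambda.

Section Construction.
Variables (F : fieldType) (q : F) (V : lmodType F) (A B C : {linear V -> V}).
Hypothesis hV : is_triq_module q A B C.
Hypotheses (hq : q != 0) (hq4 : q ^+ 4 != 1).
Variables (a b c lam : F) (v : V).
Hypotheses (ha : a != 0) (hb : b != 0) (hc : c != 0) (hlam : lam != 0).
Hypothesis hBv : B v = (b / lam + (b / lam)^-1) *: v.
Hypothesis hABv : B (A v) - (b / lam * q ^+ 2 + (b / lam)^-1 * q^-2) *: A v
  = ((q - q^-1) * varphiM q a b c lam) *: v.
Hypothesis hbeta : beta_op q A B C v = betaM q a b c lam *: v.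
Hypothesis hgamma : gamma_op q A B C v = gammaM q a b c lam *: v.

Local Notation AM := (AM q a lam).
Local Notation BM := (BM q a b c lam).
Local Notation CM := (CM q a b c lam).

Fixpoint mvec k : V :=
  if k is k'.+1 then A (mvec k') - theta q a lam k' *: mvec k' else v.

Fact mhom_key : unit. Proof. by []. Qed.
Definition mhom : {poly F} -> V :=
  locked_with mhom_key (fun p => \sum_(i < size p) p`_i *: mvec i).

Lemma mhom_widen n (p : {poly F}) : (size p <= n)%N -> mhom p = \sum_(i < n) p`_i *: mvec i.
Proof.
move=> hn; rewrite /mhom unlock (big_ord_widen n (fun i => p`_i *: mvec i) hn) big_mkcond.
apply: eq_bigr => i _; case: ltnP => // hi.
by rewrite nth_default ?scale0r.
Qed.

Lemma mhom_is_linear : linear mhom.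
Proof.
move=> t p r; set n := maxn (size (t *: p + r)) (maxn (size p) (size r)).
rewrite !(mhom_widen (n := n)) ?leq_max ?leqnn ?orbT //.
rewrite scaler_sumr -big_split; apply: eq_bigr => i _.
by rewrite coefD coefZ scalerDl scalerA.
Qed.

HB.instance Definition _ := GRing.isLinear.Build F {poly F} V *:%R mhom mhom_is_linear.

Lemma mhom_Xn k : mhom 'X^k = mvec k.
Proof.
rewrite (mhom_widen (n := k.+1)) ?size_polyXn // big_ord_recr /= coefXn eqxx scale1r.
by rewrite big1 ?add0r // => i _; rewrite coefXn ltn_eqF ?scale0r.
Qed.

Lemma mhom1 : mhom 1 = v.
Proof. by rewrite -(expr0 'X) mhom_Xn. Qed.

Lemma mhom_AM p : mhom (AM p) = A (mhom p).
Proof.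
rewrite -[p]coefK poly_def !linear_sum; apply: eq_bigr => i _.
by rewrite !linearZ /= AM_Xn linearD linearZ /= !mhom_Xn /= subrK.
Qed.

Lemma mhom_eigen (Z : {linear V -> V}) z :
  commutes Z A -> Z v = z *: v -> forall p, Z (mhom p) = z *: mhom p.
Proof.
move=> hZA hZv; have hZm k : Z (mvec k) = z *: mvec k.
  elim: k => [|k IHk] //=.
  by rewrite linearB linearZ /= hZA IHk linearZ /= scalerBr !scalerA mulrC.
move=> p; rewrite -[p]coefK poly_def !linear_sum; apply: eq_bigr => i _.
by rewrite !linearZ /= mhom_Xn hZm.
Qed.

Definition Bdefect p := B (mhom p) - mhom (BM p).

Lemma Bdefect_is_linear : linear Bdefect.
Proof. by move=> t x y; exact: (linearP ((B \o mhom) \- (mhom \o BM))). Qed.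

HB.instance Definition _ := GRing.isLinear.Build F {poly F} V *:%R Bdefect Bdefect_is_linear.

Let mhomZ t p : mhom (t *: p) = t *: mhom p. Proof. exact: linearZZ. Qed.
Let mhomD p r : mhom (p + r) = mhom p + mhom r. Proof. exact: raddfD. Qed.
Let mhomB p r : mhom (p - r) = mhom p - mhom r. Proof. exact: raddfB. Qed.

Let hs := qDV_neq0 hq hq4.
Let mhom_gamma p : gamma_op q A B C (mhom p) = gammaM q a b c lam *: mhom p.
Proof. exact: mhom_eigen (gamma_op_commutes_A hV) hgamma p. Qed.
Let mhom_beta p : beta_op q A B C (mhom p) = betaM q a b c lam *: mhom p.
Proof. exact: mhom_eigen (beta_op_commutes_A hV) hbeta p. Qed.

Let C_mhom_expand p : C (mhom p) = (gammaM q a b c lam / (q + q^-1)) *: mhom p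
  - (q ^+ 2 - q^-2)^-1 *: (q *: A (B (mhom p)) - q^-1 *: B (A (mhom p))).
Proof. by rewrite (C_gamma_op A B C hs) mhom_gamma scalerA mulrC. Qed.

Let mhom_CM_expand p : mhom (CM p) = (gammaM q a b c lam / (q + q^-1)) *: mhom p
  - (q ^+ 2 - q^-2)^-1 *: (q *: mhom (AM (BM p)) - q^-1 *: mhom (BM (AM p))).
Proof. by rewrite /CM mhomB !mhomZ mhomB !mhomZ. Qed.

Lemma C_mhom x : B (mhom x) = mhom (BM x) -> B (mhom (AM x)) = mhom (BM (AM x)) ->
  C (mhom x) = mhom (CM x).
Proof.
move=> hB0 hB1; rewrite C_mhom_expand mhom_CM_expand hB0 -[A (mhom x)]mhom_AM hB1.
by rewrite mhom_AM.
Qed.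

(* In beta (f x) = f (beta_M x), with C eliminated through gamma on both sides,
   everything cancels except the defects at x, A_M x and A_M^2 x. *)
Lemma Bdefect_AM2 x : Bdefect x = 0 -> Bdefect (AM x) = 0 -> Bdefect (AM (AM x)) = 0.
Proof.
move=> /subr0_eq hB0 /subr0_eq hB1; apply/eqP; rewrite subr_eq0; apply/eqP.
have := mhom_beta x.
rewrite -mhomZ -(beta_opM hq hq4 ha hb hc hlam) /beta_op /centB.
rewrite mhomZ mhomD mhomZ mhomB !mhomZ.
rewrite hB0 (C_mhom hB0 hB1) -[A (mhom x)]mhom_AM -mhom_AM C_mhom_expand mhom_CM_expand.
rewrite hB1 -!mhom_AM.
have hk : (q ^+ 2 - q^-2)^-1 != 0 by rewrite invr_eq0 q2BV2_neq0.
have hqV : q^-1 != 0 by rewrite invr_eq0.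
by move/(scalerI hs)/addrI/(scalerI hk)/addIr/(scalerI hq)/addrI/oppr_inj
  /(scalerI hk)/addrI/oppr_inj/(scalerI hqV).
Qed.

Lemma Bdefect_Xn n : Bdefect ('X^n) = 0.
Proof.
have BdAM k : Bdefect (AM ('X^k)) = Bdefect ('X^(k.+1)) + theta q a lam k *: Bdefect ('X^k).
  by rewrite AM_Xn linearD linearZ.
suff: Bdefect ('X^n) = 0 /\ Bdefect (AM ('X^n)) = 0 by case.
elim: n => [|n [h0 h1]].
  rewrite expr0; split; first by rewrite /Bdefect mhom1 hBv BM1 mhomZ mhom1 subrr.
  apply/eqP; rewrite subr_eq0 mhom_AM mhom1; apply/eqP.
  have := congr1 mhom (BM_AM1 hq ha hb hc hlam).
  by rewrite mhomB !mhomZ mhom1 mhom_AM mhom1 -hABv => /addIr.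
have h2 : Bdefect ('X^(n.+1)) = 0.
  by move: (BdAM n); rewrite h0 h1 scaler0 addr0 => <-.
have hAA : AM (AM ('X^n)) = AM ('X^(n.+1)) + theta q a lam n *: AM ('X^n).
  by rewrite {1}AM_Xn linearD linearZ.
split=> //; have := Bdefect_AM2 h0 h1.
by rewrite hAA linearD linearZ /= h1 scaler0 addr0.
Qed.

Lemma mhom_BM p : mhom (BM p) = B (mhom p).
Proof.
apply/esym/subr0_eq; rewrite -/(Bdefect p) -[p]coefK poly_def linear_sum big1 // => i _.
by rewrite linearZ /= Bdefect_Xn scaler0.
Qed.

Lemma mhom_CM p : mhom (CM p) = C (mhom p).
Proof. by rewrite (C_mhom (esym (mhom_BM p)) (esym (mhom_BM (AM p)))). Qed.

Lemma is_Mhom_mhom : is_Mhom q a b c lam A B C mhom.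
Proof. by split; [exact: mhom_AM | exact: mhom_BM | exact: mhom_CM]. Qed.

End Construction.

Theorem theorem3p3 (F : closedFieldType) (q : F) (d : nat)
    (hq : d.-primitive_root q) (hd : d \notin [:: 1%N; 2%N; 4%N])
    (V : lmodType F) (A B C : {linear V -> V})
    (hV : is_triq_module q A B C)
    (a b c lam mu vphi omS omE : F)
    (ha : a != 0) (hb : b != 0) (hc : c != 0) (hlam : lam != 0) (hmu : mu != 0)
    (v : V) (hv0 : v != 0)
    (hBv : B v = (mu + mu^-1) *: v)
    (hABv : B (A v) - (mu * q ^+ 2 + mu^-1 * q^-2) *: A v = ((q - q^-1) * vphi) *: v)
    (hbeta : beta_op q A B C v = omS *: v)
    (hgamma : gamma_op q A B C v = omE *: v) :
  feasible q a b c lam mu vphi omS omE <->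
  (mu = b / lam /\
   exists f : {linear {poly F} -> V},
     is_Mhom q a b c lam A B C f /\ f 1 = v).
Proof.
have hq0 : q != 0 by rewrite (prim_root_eq0 hq) -lt0n (prim_order_gt0 hq).
have hq4 := prim_root_expr4_neq1 hq hd.
split=> [[hmu_b hvphi homS homE] | [hmu_b [f [[hfA hfB hfC] hf1]]]].
  subst mu vphi omS omE; split=> //.
  exists (mhom q A a lam v : {linear {poly F} -> V}); split; last exact: mhom1.
  exact: is_Mhom_mhom.
split=> //.
- apply/(mulfI (qBV_neq0 hq0 hq4))/(scalerIv hv0).
  by rewrite -hABv hmu_b -hf1 -hfA -hfB -linearZ -linearB BM_AM1 // linearZ hf1.
- apply/esym/(scalerIv hv0).
  by rewrite -hbeta -hf1 -(beta_op_morph q hfA hfB hfC) beta_opM // linearZ.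
- apply/esym/(scalerIv hv0).
  by rewrite -hgamma -hf1 -(gamma_op_morph q hfA hfB hfC) gamma_opM ?linearZ.
Qed.
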